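(* Let $T\in\mathcal M_n$, and let $f,g:[0,\infty)\to[0,\infty)$ be continuous with $f(t)g(t)=t$ for all $t\ge0$. Then for all vectors $x,y\in\mathbb C^n$, \[|\langle\mathfrak RTx,y\rangle|\le\frac12\sqrt{\big\langle(f^2(|T|)+f^2(|T^*|))x,x\big\rangle\,\big\langle(g^2(|T|)+g^2(|T^*|))y,y\big\rangle}\] and \[|\langle\mathfrak ITx,y\rangle|\le\frac12\sqrt{\big\langle(f^2(|T|)+f^2(|T^*|))x,x\big\rangle\,\big\langle(g^2(|T|)+g^2(|T^*|))y,y\big\rangle}.\]
   Context: $\mathcal M_n$ denotes the algebra of $n\times n$ complex matrices. $|X|=(X^*X)^{1/2}$; functions of positive semidefinite matrices are defined by functional calculus. $\mathfrak RT=\frac{T+T^*}{2}$, $\mathfrak IT=\frac{T-T^*}{2i}$. $\langle\cdot,\cdot\rangle$ is the standard inner product on $\mathbb C^n$. *)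

From HB Require Import structures.
From mathcomp Require Import all_boot all_order all_algebra.
From mathcomp Require Import sesquilinear spectral.
From mathcomp Require Import complex.
From mathcomp Require Import all_classical all_reals all_analysis.

Set Implicit Arguments.
Unset Strict Implicit.
Unset Printing Implicit Defensive.

Import Order.TTheory GRing.Theory Num.Theory Num.Def.
Local Open Scope ring_scope.
Local Open Scope sesquilinear_scope.

Definition hadj {R : realType} n (T : 'M[R[i]]_n) : 'M[R[i]]_n := T ^t conjC.

Definition inner {R : realType} n (u v : 'cV[R[i]]_n) : R[i] :=
  \sum_(i < n) u i 0 * (v i 0)^*.

(* Functional calculus for a Hermitian (normal) matrix A = U^-1 diag(d) U
   (U unitary, given by MathComp's spectral theorem):
   h(A) := U^-1 diag(h(d_i)) U.  For Hermitian A the d_i are real, so h is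
   applied to their real parts. *)
Definition matfun {R : realType} n (h : R -> R) (A : 'M[R[i]]_n) : 'M[R[i]]_n :=
  invmx (spectralmx A) *m
  diag_mx (map_mx (fun z : R[i] => ((h (complex.Re z))%:C)%C) (spectral_diag A)) *m
  spectralmx A.

Definition absmx {R : realType} n (X : 'M[R[i]]_n) : 'M[R[i]]_n :=
  matfun (@Num.sqrt R) (hadj X *m X).

Definition cartRe {R : realType} n (T : 'M[R[i]]_n) : 'M[R[i]]_n :=
  (2 : R[i])^-1 *: (T + hadj T).
Definition cartIm {R : realType} n (T : 'M[R[i]]_n) : 'M[R[i]]_n :=
  (2 * 'i : R[i])^-1 *: (T - hadj T).

(* Diagonalise T^*T = P^* diag(d) P and TT^* = Q^* diag(e) Q with unitary P, Q.
   Then M := Q T P^* satisfies M^*M = diag d and MM^* = diag e, and computing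
   MM^*M in two ways forces e_i = d_j whenever M_ij <> 0.  On such entries
   g(sqrt e_i) f(sqrt d_j) = sqrt d_j, so M = diag(g(sqrt e)) N diag(f(sqrt d))
   where N, the matrix M with its columns normalised, is a contraction, and
   Cauchy-Schwarz yields the mixed Schwarz inequality
     |<Tx, y>|^2 <= <f^2(|T|) x, x> <g^2(|T^*|) y, y>.
   Applying it to T and T^* and writing 2 Re T = T + T^*, 2i Im T = T - T^*,
   the two bounds combine through
     sqrt(a1 b2) + sqrt(a2 b1) <= sqrt((a1 + a2)(b1 + b2)). *)

From HB Require Import structures.
From mathcomp Require Import all_boot all_order all_algebra.
From mathcomp Require Import sesquilinear spectral.
From mathcomp Require Import complex.
From mathcomp Require Import all_classical all_reals all_analysis.
From mathcomp Require Import ring.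

Import Order.TTheory GRing.Theory Num.Theory Num.Def.
Import numFieldNormedType.Exports.
Local Open Scope ring_scope.

Set Implicit Arguments.
Unset Strict Implicit.
Unset Printing Implicit Defensive.

Lemma diag_mx_intertwine_eq (K : idomainType) m n (a : 'rV[K]_m) (b : 'rV[K]_n)
    (W : 'M[K]_(m, n)) :
  diag_mx a *m W = W *m diag_mx b -> forall i j, W i j != 0 -> a 0 i = b 0 j.
Proof.
move=> /matrixP eqW i j nzW; move: (eqW i j).
by rewrite mul_diag_mx mul_mx_diag !mxE mulrC => /(mulfI nzW).
Qed.

Lemma diag_mx_intertwine_map (K : idomainType) m n (phi : K -> K)
    (a : 'rV[K]_m) (b : 'rV[K]_n) (W : 'M[K]_(m, n)) :
  diag_mx a *m W = W *m diag_mx b ->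
  diag_mx (map_mx phi a) *m W = W *m diag_mx (map_mx phi b).
Proof.
move=> eqW; apply/matrixP => i j; rewrite mul_diag_mx mul_mx_diag !mxE.
have [->|nzW] := eqVneq (W i j) 0; first by rewrite mulr0 mul0r.
by rewrite (diag_mx_intertwine_eq eqW nzW) mulrC.
Qed.

Section NumClosedField.
Variable C : numClosedFieldType.
Local Open Scope sesquilinear_scope.

Lemma trmxC_mul m n p (A : 'M[C]_(m, n)) (B : 'M[C]_(n, p)) :
  (A *m B)^t* = B^t* *m A^t*.
Proof. by rewrite trmx_mul map_mxM. Qed.

Lemma unitary_mulCmx n (U : 'M[C]_n) : U \is unitarymx -> U^t* *m U = 1%:M.
Proof. by move=> uU; rewrite -invmx_unitary // mulVmx // unitarymx_unit. Qed.

Lemma gram_normalmx m n (M : 'M[C]_(m, n)) : M^t* *m M \is normalmx.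
Proof. by apply/normalmxP; rewrite trmxC_mul trmxCK. Qed.

Lemma spectral_diag_conj n (A : 'M[C]_n) : A \is normalmx ->
  spectralmx A *m A *m (spectralmx A)^t* = diag_mx (spectral_diag A).
Proof.
move=> /orthomx_spectralP; set V := spectralmx A => defA.
have uV : V \is unitarymx := spectral_unitarymx A.
rewrite {1}defA invmx_unitary // !mulmxA (unitarymxP uV) mul1mx.
exact: mulmxtVK.
Qed.

Definition spectral_fun n (phi : C -> C) (A : 'M[C]_n) : 'M[C]_n :=
  invmx (spectralmx A) *m diag_mx (map_mx phi (spectral_diag A)) *m spectralmx A.

Lemma spectral_fun_unitary n (phi : C -> C) (U : 'M[C]_n) (s : 'rV[C]_n) :
  U \is unitarymx ->
  spectral_fun phi (U^t* *m diag_mx s *m U) = U^t* *m diag_mx (map_mx phi s) *m U.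
Proof.
set A := U^t* *m diag_mx s *m U => uU.
have nA : A \is normalmx.
  by apply/orthomx_spectral_subproof; exists (U, s); rewrite //= invmx_unitary.
have := spectral_diag_conj nA.
rewrite /spectral_fun invmx_unitary ?spectral_unitarymx //.
set V := spectralmx A; set e := spectral_diag A => VAV.
have uV : V \is unitarymx := spectral_unitarymx A.
set W := V *m U^t*.
have eW : diag_mx e *m W = W *m diag_mx s.
  by rewrite -VAV /W /A !mulmxA mulmxKtV ?mulmxtVK.
have VW : V^t* *m W = U^t* by rewrite mulmxA unitary_mulCmx // mul1mx.
have VWU : V = W *m U by rewrite mulmxKtV.
clearbody W; rewrite {2}VWU !mulmxA -(mulmxA (V^t*)).
by rewrite (diag_mx_intertwine_map phi eW) !mulmxA VW.
Qed.

Lemma cvform_dotmx n (p q : 'cV[C]_n) : (q^t* *m p) 0 0 = dotmx p^T q^T.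
Proof. by rewrite dotmxE !mxE; apply: eq_bigr => j _; rewrite !mxE mulrC. Qed.

Lemma cvform_congr m n (P : 'M[C]_(m, n)) (D : 'M[C]_m) (x : 'cV[C]_n) :
  x^t* *m (P^t* *m D *m P *m x) = (P *m x)^t* *m D *m (P *m x).
Proof. by rewrite trmxC_mul !mulmxA. Qed.

Lemma cvform_diag_ge0 n (c : 'rV[C]_n) (u : 'cV[C]_n) :
  (forall j, 0 <= c 0 j) -> 0 <= (u^t* *m diag_mx c *m u) 0 0.
Proof.
move=> c_ge0; rewrite mul_mx_diag mxE; apply: sumr_ge0 => j _.
by rewrite !mxE mulrAC mulr_ge0 // mulrC mul_conjC_ge0.
Qed.

Lemma cvform_diag_le n (c : 'rV[C]_n) (u : 'cV[C]_n) :
  (forall j, c 0 j <= 1) -> (u^t* *m diag_mx c *m u) 0 0 <= (u^t* *m u) 0 0.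
Proof.
move=> c_le1; rewrite mul_mx_diag !mxE; apply: ler_sum => j _.
by rewrite !mxE mulrAC ler_piMr // mulrC mul_conjC_ge0.
Qed.

Lemma diag_mx_realC n (d : 'rV[C]_n) :
  (forall j, d 0 j \is Num.real) -> (diag_mx d)^t* = diag_mx d.
Proof.
move=> dR; rewrite tr_diag_mx map_diag_mx; congr diag_mx.
by apply/rowP => j; rewrite mxE; exact: conj_Creal.
Qed.

Lemma gram_diag_ge0 m n (M : 'M[C]_(m, n)) (a : 'rV[C]_n) :
  M^t* *m M = diag_mx a -> forall j, 0 <= a 0 j.
Proof.
move=> gM j; have := congr1 (fun A : 'M[C]_n => A j j) gM.
rewrite /= !mxE eqxx mulr1n => <-.
by apply: sumr_ge0 => k _; rewrite !mxE mulrC mul_conjC_ge0.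
Qed.

Lemma gram_diag_col_eq0 m n (M : 'M[C]_(m, n)) (a : 'rV[C]_n) :
  M^t* *m M = diag_mx a -> forall i j, a 0 j = 0 -> M i j = 0.
Proof.
move=> gM i j aj0; have := congr1 (fun A : 'M[C]_n => A j j) gM.
rewrite /= !mxE eqxx mulr1n aj0 => /psumr_eq0P sum0.
have /sum0 /(_ i isT) : forall k, true -> 0 <= M^t* j k * M k j.
  by move=> k _; rewrite !mxE mulrC mul_conjC_ge0.
by rewrite !mxE mulrC => /eqP; rewrite mul_conjC_eq0 => /eqP.
Qed.

(* A zero column stays zero, as (sqrtC 0)^-1 = 0. *)
Definition col_normalize m n (a : 'rV[C]_n) (M : 'M[C]_(m, n)) : 'M[C]_(m, n) :=
  M *m diag_mx (map_mx (fun z => (sqrtC z)^-1) a).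

Lemma col_normalize_contraction m n (M : 'M[C]_(m, n)) (a : 'rV[C]_n)
    (w : 'cV[C]_n) :
  M^t* *m M = diag_mx a ->
  ((col_normalize a M *m w)^t* *m (col_normalize a M *m w)) 0 0
    <= (w^t* *m w) 0 0.
Proof.
move=> gM; have a_ge0 := gram_diag_ge0 gM.
rewrite /col_normalize !trmxC_mul diag_mx_realC => [|j]; last first.
  by rewrite mxE rpredV sqrtC_real.
rewrite !mulmxA -(mulmxA _ (M^t*) M) gM -(mulmxA (w^t* *m _) (diag_mx a)).
rewrite mulmx_diag -(mulmxA (w^t*)) mulmx_diag.
apply: cvform_diag_le => j; rewrite !mxE -{2}(sqrtCK (a 0 j)).
have [->|nz] := eqVneq (sqrtC (a 0 j)) 0; first by rewrite invr0 !mul0r ler01.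
by rewrite expr2 mulfK // mulVf.
Qed.

Lemma col_normalize_factor m n (M : 'M[C]_(m, n)) (a al : 'rV[C]_n)
    (b be : 'rV[C]_m) :
  M^t* *m M = diag_mx a -> M *m M^t* = diag_mx b ->
  (forall i j, b 0 i = a 0 j -> be 0 i * al 0 j = sqrtC (a 0 j)) ->
  M = diag_mx be *m col_normalize a M *m diag_mx al.
Proof.
move=> ga gb be_al.
have eM : diag_mx b *m M = M *m diag_mx a by rewrite -ga -gb mulmxA.
apply/matrixP => i j.
rewrite /col_normalize mul_mx_diag mul_diag_mx mul_mx_diag !mxE.
have [->|nzM] := eqVneq (M i j) 0; first by rewrite mul0r mulr0 mul0r.
have nz_aj : sqrtC (a 0 j) != 0.
  by rewrite sqrtC_eq0; apply: contra nzM => /eqP /(gram_diag_col_eq0 ga i) ->.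
by rewrite mulrAC be_al ?(diag_mx_intertwine_eq eM nzM) // mulrCA mulfV ?mulr1.
Qed.

Lemma diag_mx_real_sqr n (d : 'rV[C]_n) : (forall j, d 0 j \is Num.real) ->
  diag_mx (\row_j (d 0 j ^+ 2)) = (diag_mx d)^t* *m diag_mx d.
Proof.
move=> dR; rewrite diag_mx_realC // mulmx_diag.
by congr diag_mx; apply/rowP => j; rewrite !mxE expr2.
Qed.

Lemma mixed_schwarz_diag m n (M : 'M[C]_(m, n)) (a al : 'rV[C]_n)
    (b be : 'rV[C]_m) (u : 'cV[C]_n) (v : 'cV[C]_m) :
  M^t* *m M = diag_mx a -> M *m M^t* = diag_mx b ->
  (forall i j, b 0 i = a 0 j -> be 0 i * al 0 j = sqrtC (a 0 j)) ->
  (forall j, al 0 j \is Num.real) -> (forall i, be 0 i \is Num.real) ->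
  `|(v^t* *m M *m u) 0 0| ^+ 2 <=
    (u^t* *m diag_mx (\row_j (al 0 j ^+ 2)) *m u) 0 0 *
    (v^t* *m diag_mx (\row_i (be 0 i ^+ 2)) *m v) 0 0.
Proof.
move=> ga gb be_al alR beR.
set N := col_normalize a M; set w := diag_mx al *m u; set z := diag_mx be *m v.
have -> : v^t* *m M *m u = z^t* *m (N *m w).
  rewrite {1}(col_normalize_factor ga gb be_al) trmxC_mul.
  by rewrite diag_mx_realC // !mulmxA.
have -> : u^t* *m diag_mx (\row_j (al 0 j ^+ 2)) *m u = w^t* *m w.
  by rewrite diag_mx_real_sqr // trmxC_mul !mulmxA.
have -> : v^t* *m diag_mx (\row_i (be 0 i ^+ 2)) *m v = z^t* *m z.
  by rewrite diag_mx_real_sqr // trmxC_mul !mulmxA.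
rewrite !cvform_dotmx.
apply: le_trans (CauchySchwarz (@dotmx C m) (N *m w)^T z^T).1 _.
rewrite ler_wpM2r ?dnorm_ge0 //.
by have := col_normalize_contraction w ga; rewrite !cvform_dotmx.
Qed.

Lemma addr_sqrtCM_le (a1 a2 b1 b2 : C) :
  0 <= a1 -> 0 <= a2 -> 0 <= b1 -> 0 <= b2 ->
  sqrtC (a1 * b2) + sqrtC (a2 * b1) <= sqrtC ((a1 + a2) * (b1 + b2)).
Proof.
move=> a1_ge0 a2_ge0 b1_ge0 b2_ge0.
rewrite [sqrtC (a1 * b2)]sqrtCM ?nnegrE // [sqrtC (a2 * b1)]sqrtCM ?nnegrE //.
have -> : (a1 + a2) * (b1 + b2) =
    (sqrtC a1 ^+ 2 + sqrtC a2 ^+ 2) * (sqrtC b1 ^+ 2 + sqrtC b2 ^+ 2).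
  by rewrite !sqrtCK.
set x1 := sqrtC a1; set x2 := sqrtC a2; set y1 := sqrtC b1; set y2 := sqrtC b2.
have [x1_ge0 x2_ge0] : 0 <= x1 /\ 0 <= x2 by rewrite !sqrtC_ge0.
have [y1_ge0 y2_ge0] : 0 <= y1 /\ 0 <= y2 by rewrite !sqrtC_ge0.
have lhs_ge0 : 0 <= x1 * y2 + x2 * y1 by rewrite addr_ge0 ?mulr_ge0.
rewrite -(sqrCK lhs_ge0) ler_sqrtC ?nnegrE ?exprn_ge0 //;
  last by rewrite mulr_ge0 ?addr_ge0 ?exprn_ge0.
rewrite -subr_ge0.
have -> : (x1 ^+ 2 + x2 ^+ 2) * (y1 ^+ 2 + y2 ^+ 2) - (x1 * y2 + x2 * y1) ^+ 2
    = (x1 * y1 - x2 * y2) * (x1 * y1 - x2 * y2)^*.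
  by rewrite conj_Creal ?rpredB ?rpredM ?ger0_real //; ring.
exact: mul_conjC_ge0.
Qed.

Lemma normrD_le_sqrtC (p q a1 a2 b1 b2 : C) :
  0 <= a1 -> 0 <= a2 -> 0 <= b1 -> 0 <= b2 ->
  `|p| ^+ 2 <= a1 * b2 -> `|q| ^+ 2 <= a2 * b1 ->
  `|p + q| <= sqrtC ((a1 + a2) * (b1 + b2)).
Proof.
move=> a1_ge0 a2_ge0 b1_ge0 b2_ge0 le_p le_q.
have norm_le_sqrtC (x y : C) : `|x| ^+ 2 <= y -> `|x| <= sqrtC y.
  move=> le_xy; have y_ge0 : 0 <= y := le_trans (exprn_ge0 2 (normr_ge0 x)) le_xy.
  by rewrite -(sqrCK (normr_ge0 x)) ler_sqrtC // nnegrE exprn_ge0.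
apply: le_trans (ler_normD p q) _.
apply: le_trans (lerD (norm_le_sqrtC _ _ le_p) (norm_le_sqrtC _ _ le_q)) _.
exact: addr_sqrtCM_le.
Qed.

End NumClosedField.

Section ComplexMatrix.
Variable R : realType.
Local Open Scope sesquilinear_scope.

Lemma hadjK n (T : 'M[R[i]]_n) : hadj (hadj T) = T.
Proof. exact: trmxCK. Qed.

Lemma inner_cvform n (u v : 'cV[R[i]]_n) : inner u v = (v^t* *m u) 0 0.
Proof. by rewrite /inner mxE; apply: eq_bigr => j _; rewrite !mxE mulrC. Qed.

Lemma innerDl n (u w v : 'cV[R[i]]_n) : inner (u + w) v = inner u v + inner w v.
Proof. by rewrite !inner_cvform mulmxDr mxE. Qed.

Lemma innerZl n (c : R[i]) (u v : 'cV[R[i]]_n) : inner (c *: u) v = c * inner u v.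
Proof. by rewrite !inner_cvform -scalemxAr mxE. Qed.

Lemma innerNl n (u v : 'cV[R[i]]_n) : inner (- u) v = - inner u v.
Proof. by rewrite !inner_cvform mulmxN mxE. Qed.

Lemma matfunE n (h : R -> R) (A : 'M[R[i]]_n) :
  matfun h A = spectral_fun (fun z => (h (complex.Re z))%:C%C) A.
Proof. by []. Qed.

Lemma sqrtC_Re (z : R[i]) : 0 <= z -> sqrtC z = (Num.sqrt (complex.Re z))%:C%C.
Proof.
move=> z_ge0; have Re_ge0 : 0 <= complex.Re z.
  by move: z_ge0; rewrite lecE => /andP[].
have sqr_z : ((Num.sqrt (complex.Re z))%:C%C) ^+ 2 = z.
  by rewrite -rmorphXn /= sqr_sqrtr // RRe_real // ger0_real.
by rewrite -{1}sqr_z sqrCK // ler0c sqrtr_ge0.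
Qed.

Lemma matfun_absmx n (h : R -> R) (T : 'M[R[i]]_n) :
  matfun h (absmx T) =
  (spectralmx (hadj T *m T))^t* *m
  diag_mx (map_mx (fun z => (h (Num.sqrt (complex.Re z)))%:C%C)
                  (spectral_diag (hadj T *m T))) *m
  spectralmx (hadj T *m T).
Proof.
have uP := spectral_unitarymx (hadj T *m T).
rewrite matfunE /absmx matfunE {2}/spectral_fun invmx_unitary //.
rewrite spectral_fun_unitary // -map_mx_comp.
by congr (_ *m diag_mx _ *m _); apply/rowP => j; rewrite !mxE.
Qed.

Lemma matfun_absmx_ge0 n (h : R -> R) (T : 'M[R[i]]_n) (x : 'cV[R[i]]_n) :
  0 <= inner (matfun (fun t => h t ^+ 2) (absmx T) *m x) x.
Proof.
rewrite inner_cvform matfun_absmx cvform_congr.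
by apply: cvform_diag_ge0 => j; rewrite mxE ler0c sqr_ge0.
Qed.

Lemma mixed_schwarz n (T : 'M[R[i]]_n) (f g : R -> R) (x y : 'cV[R[i]]_n) :
  (forall t, 0 <= t -> f t * g t = t) ->
  `|inner (T *m x) y| ^+ 2 <=
    inner (matfun (fun t => f t ^+ 2) (absmx T) *m x) x *
    inner (matfun (fun t => g t ^+ 2) (absmx (hadj T)) *m y) y.
Proof.
move=> fg; rewrite !inner_cvform !matfun_absmx hadjK.
set P := spectralmx _; set d := spectral_diag _.
set Q := spectralmx _; set e := spectral_diag _.
have uP : P \is unitarymx := spectral_unitarymx _.
have uQ : Q \is unitarymx := spectral_unitarymx _.
(* M is T written in the eigenbases of |T| and |T^*|. *)
pose M := Q *m T *m P^t*.
have defT : T = Q^t* *m M *m P.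
  by rewrite /M !mulmxA unitary_mulCmx // mul1mx mulmxKtV.
have gM : M^t* *m M = diag_mx d.
  rewrite -(spectral_diag_conj (gram_normalmx T)).
  by rewrite /M !trmxC_mul trmxCK !mulmxA mulmxKtV.
have gMC : M *m M^t* = diag_mx e.
  have nTTC : T *m hadj T \is normalmx by rewrite -{1}(trmxCK T) gram_normalmx.
  rewrite -(spectral_diag_conj nTTC).
  by rewrite /M !trmxC_mul trmxCK !mulmxA mulmxKtV.
pose al := map_mx (fun z => (f (Num.sqrt (complex.Re z)))%:C%C) d.
pose be := map_mx (fun z => (g (Num.sqrt (complex.Re z)))%:C%C) e.
have be_al i j : e 0 i = d 0 j -> be 0 i * al 0 j = sqrtC (d 0 j).
  rewrite !mxE => ->; rewrite -rmorphM /= mulrC fg ?sqrtr_ge0 //.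
  by rewrite sqrtC_Re // (gram_diag_ge0 gM).
have real_cast (r : R) : r%:C%C \is Num.real by apply/complex_realP; exists r.
have alR j : al 0 j \is Num.real by rewrite mxE.
have beR i : be 0 i \is Num.real by rewrite mxE.
have sqr_map (h : R -> R) (c : 'rV[R[i]]_n) :
    map_mx (fun z => (h (Num.sqrt (complex.Re z)) ^+ 2)%:C%C) c =
    \row_j (map_mx (fun z => (h (Num.sqrt (complex.Re z)))%:C%C) c 0 j ^+ 2).
  by apply/rowP => j; rewrite !mxE rmorphXn.
have -> : y^t* *m (T *m x) = (Q *m y)^t* *m M *m (P *m x).
  by rewrite {1}defT trmxC_mul !mulmxA.
rewrite !cvform_congr !sqr_map -/al -/be.
exact: (mixed_schwarz_diag (P *m x) (Q *m y) gM gMC be_al alR beR).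
Qed.

End ComplexMatrix.

Theorem theorem3p8 (R : realType) (n : nat) (T : 'M[R[i]]_n) (f g : R -> R)
  (f_cont : {within [set t : R | 0 <= t], continuous f}%classic)
  (g_cont : {within [set t : R | 0 <= t], continuous g}%classic)
  (f_ge0 : forall t : R, 0 <= t -> 0 <= f t)
  (g_ge0 : forall t : R, 0 <= t -> 0 <= g t)
  (fg : forall t : R, 0 <= t -> f t * g t = t) :
  forall x y : 'cV[R[i]]_n,
    let F := matfun (fun t => f t ^+ 2) (absmx T)
             + matfun (fun t => f t ^+ 2) (absmx (hadj T)) in
    let G := matfun (fun t => g t ^+ 2) (absmx T)
             + matfun (fun t => g t ^+ 2) (absmx (hadj T)) in
    `|inner (cartRe T *m x) y|
      <= 2^-1 * sqrtC (inner (F *m x) x * inner (G *m y) y)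
    /\
    `|inner (cartIm T *m x) y|
      <= 2^-1 * sqrtC (inner (F *m x) x * inner (G *m y) y).
Proof.
move=> x y F G.
have eF : inner (F *m x) x =
    inner (matfun (fun t => f t ^+ 2) (absmx T) *m x) x +
    inner (matfun (fun t => f t ^+ 2) (absmx (hadj T)) *m x) x.
  by rewrite /F mulmxDl innerDl.
have eG : inner (G *m y) y =
    inner (matfun (fun t => g t ^+ 2) (absmx T) *m y) y +
    inner (matfun (fun t => g t ^+ 2) (absmx (hadj T)) *m y) y.
  by rewrite /G mulmxDl innerDl.
have half_bound (c p q : R[i]) : `|c| = 2^-1 ->
    `|p| ^+ 2 <= inner (matfun (fun t => f t ^+ 2) (absmx T) *m x) x *
                 inner (matfun (fun t => g t ^+ 2) (absmx (hadj T)) *m y) y ->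
    `|q| ^+ 2 <= inner (matfun (fun t => f t ^+ 2) (absmx (hadj T)) *m x) x *
                 inner (matfun (fun t => g t ^+ 2) (absmx T) *m y) y ->
    `|c * (p + q)| <= 2^-1 * sqrtC (inner (F *m x) x * inner (G *m y) y).
  move=> c_half le_p le_q; rewrite normrM c_half eF eG.
  apply: ler_wpM2l; first by rewrite invr_ge0 ler0n.
  by apply: normrD_le_sqrtC le_p le_q; apply: matfun_absmx_ge0.
have schwarzT := mixed_schwarz T x y fg.
have schwarzTC := mixed_schwarz (hadj T) x y fg; rewrite hadjK in schwarzTC.
split.
- rewrite /cartRe -scalemxAl mulmxDl innerZl innerDl.
  by apply: half_bound schwarzT schwarzTC; rewrite ger0_norm // invr_ge0 ler0n.
- rewrite /cartIm -scalemxAl mulmxBl innerZl innerDl innerNl.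
  apply: half_bound schwarzT _; last by rewrite normrN.
  by rewrite normfV normrM normCi mulr1 ger0_norm ?ler0n.
Qed.
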